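(* In the setting below, fix $k$, parameters $\rho^k>0$, $\beta^k>0$, a point $(y^k,v^k)\in\Upsilon_\tau\times\mathcal V$, and an initial point $y^{k,0}\in\Upsilon_\tau$, and run Algorithm AMA. Suppose it does not terminate, i.e. it generates an infinite sequence $\{(y^{k,j},v^{k,j})\}_{j\ge1}$. Then: (i) the sequence $\{\Psi^k(y^{k,j},v^{k,j})\}_{j\ge1}$ is strictly decreasing and converges to a finite limit; (ii) the sequence $\{(y^{k,j},v^{k,j})\}_{j\ge1}$ has at least one accumulation point; (iii) every accumulation point of $\{(y^{k,j},v^{k,j})\}_{j\ge1}$ is a partially optimal solution of the problem $\min\{\Psi^k(y,v): y\in\Upsilon_\tau,\ v\in\mathcal V\}$.
   Context: Setting. $\mathcal A$ is a finite set of links; $\mathcal V=\{\Delta h: h\ge0,\ \Lambda h=d\}\subset\mathbb R^{|\mathcal A|}$ is the set of feasible link flows, where $\Delta$ is a 0/1 link–route incidence matrix, $\Lambda$ a 0/1 OD–route incidence matrix in which every route belongs to exactly one OD pair and every OD pair has at least one route, and $d>0$ a demand vector (so $\mathcal V$ is a nonempty compact convex polytope in $\mathbb R^{|\mathcal A|}_{\ge0}$). Let $u_a\ge0$, $\mathcal Y=\{y: 0\le y_a\le u_a\ \forall a\}$, $1\le\tau\le|\mathcal A|$ an integer, $\Upsilon_\tau=\{y\in\mathcal Y: |\{a: y_a>0\}|\le\tau\}$. Standing assumptions: for each $a$, the link travel time $t_a(y_a,v_a)$ is continuously differentiable and strictly increasing in $v_a$ for $y_a\ge0$; the expansion cost $G_a(y_a)$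 is nonnegative, continuously differentiable, strictly increasing and convex; $\int_0^{v_a}t_a(y_a,w)\,dw$ and $t_a(y_a,v_a)v_a$ are convex in $(y_a,v_a)$. With $\eta>0$ set $F(y,v)=\sum_a t_a(y_a,v_a)v_a+\eta\sum_a G_a(y_a)$, $f(y,v)=\sum_a\int_0^{v_a}t_a(y_a,w)\,dw$, $g(y)=\min_{v\in\mathcal V}f(y,v)$. Under these assumptions $g$ is convex and continuously differentiable on $\mathcal Y$ (a known fact). Define $\Phi(y,v;\bar y,\bar v)=f(y,v)-g(\bar y)-\nabla g(\bar y)^{\mathsf T}(y-\bar y)$ and $$\Psi^k(y,v)=F(y,v)+\rho^k\,\Phi(y,v;y^k,v^k)+\rho^k\beta^k\|(y-y^k,v-v^k)\|_2^2.$$ Algorithm AMA: for $j=0,1,\dots$: (1) let $v^{k,j+1}$ be the (unique) minimizer of $\Psi^k(y^{k,j},\cdot)$ over $\mathcal V$; (2) let $y^{k,j+1}$ be a minimizer of $\Psi^k(\cdot,v^{k,j+1})$ over $\Upsilon_\tau$; (3) if $(y^{k,j+1},v^{k,j+1})$ is partially optimal, stop and return it. A point $(\bar y,\bar v)\in\Upsilon_\tau\times\mathcal V$ is partially optimal if $\Psi^k(\bar y,\bar v)\le\Psi^k(\bar y,v)$ for all $v\in\mathcal V$ and $\Psi^k(\bar y,\bar v)\le\Psi^k(y,\bar v)$ for all $y\in\Upsilon_\tau$. *)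

From Stdlib Require Import Reals.
From Coquelicot Require Import Coquelicot.
From mathcomp Require Import ssreflect ssrfun ssrbool eqtype ssrnat seq fintype bigop.

Set Implicit Arguments.
Unset Strict Implicit.
Unset Printing Implicit Defensive.

Local Open Scope R_scope.

Definition vec (n : nat) := 'I_n -> R.

Definition rsum (k : nat) (F : 'I_k -> R) : R := \big[Rplus/0]_(i < k) F i.

Definition dot (n : nat) (x y : vec n) : R := rsum (fun a => x a * y a).
Definition sqnorm (n : nat) (x : vec n) : R := rsum (fun a => x a ^ 2).
Definition vsub (n : nat) (x y : vec n) : vec n := fun a => x a - y a.

(** Feasible link flows V = { Δ h : h >= 0, Λ h = d }, with n links, m routes,
    p OD pairs; Δ, Λ are 0/1 matrices given as boolean incidence relations. *)
Definition feasible_flows (n m p : nat) (Delta : 'I_n -> 'I_m -> bool)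
  (Lambda : 'I_p -> 'I_m -> bool) (d : vec p) (v : vec n) : Prop :=
  exists h : vec m,
    (forall r, 0 <= h r) /\
    (forall w, rsum (fun r => if Lambda w r then h r else 0) = d w) /\
    (forall a, v a = rsum (fun r => if Delta a r then h r else 0)).

Definition box (n : nat) (u : vec n) (y : vec n) : Prop :=
  forall a, 0 <= y a <= u a.

Definition supp_card (n : nat) (y : vec n) : nat :=
  #|[pred a : 'I_n | if Rlt_dec 0 (y a) then true else false]|.

Definition Upsilon (n : nat) (u : vec n) (tau : nat) (y : vec n) : Prop :=
  box u y /\ (supp_card y <= tau)%N.

Definition dom2 (y v : R) : Prop := 0 <= y /\ 0 <= v.

Definition C1_on_2d (D : R -> R -> Prop) (h : R -> R -> R) : Prop :=
  exists hy hv : R -> R -> R,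
    forall y v, D y v ->
      differentiable_pt_lim h y v (hy y v) (hv y v) /\
      continuity_2d_pt hy y v /\ continuity_2d_pt hv y v.

Definition C1_on (D : R -> Prop) (g : R -> R) : Prop :=
  exists g' : R -> R,
    forall y, D y -> is_derive g y (g' y) /\ continuous g' y.

Definition convex_on_2d (D : R -> R -> Prop) (h : R -> R -> R) : Prop :=
  forall y1 v1 y2 v2 l, D y1 v1 -> D y2 v2 -> 0 <= l <= 1 ->
    h (l * y1 + (1 - l) * y2) (l * v1 + (1 - l) * v2)
      <= l * h y1 v1 + (1 - l) * h y2 v2.

Definition convex_on (D : R -> Prop) (g : R -> R) : Prop :=
  forall x1 x2 l, D x1 -> D x2 -> 0 <= l <= 1 ->
    g (l * x1 + (1 - l) * x2) <= l * g x1 + (1 - l) * g x2.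

(** Standing assumptions on the link travel time t_a and expansion cost G_a. *)
Definition link_assumptions (t : R -> R -> R) (G : R -> R) : Prop :=
  C1_on_2d dom2 t /\
  (forall y v1 v2, 0 <= y -> 0 <= v1 -> v1 < v2 -> t y v1 < t y v2) /\
  (forall y, 0 <= y -> 0 <= G y) /\
  C1_on (fun y => 0 <= y) G /\
  (forall y1 y2, 0 <= y1 -> y1 < y2 -> G y1 < G y2) /\
  convex_on (fun y => 0 <= y) G /\
  convex_on_2d dom2 (fun y v => RInt (fun w => t y w) 0 v) /\
  convex_on_2d dom2 (fun y v => t y v * v).

Definition Fobj (n : nat) (t : 'I_n -> R -> R -> R) (G : 'I_n -> R -> R)
  (eta : R) (y v : vec n) : R :=
  rsum (fun a => t a (y a) (v a) * v a) + eta * rsum (fun a => G a (y a)).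

Definition fobj (n : nat) (t : 'I_n -> R -> R -> R) (y v : vec n) : R :=
  rsum (fun a => RInt (fun w => t a (y a) w) 0 (v a)).

Definition is_min_value (n : nat) (S : vec n -> Prop) (phi : vec n -> R)
  (gval : R) : Prop :=
  (exists v, S v /\ phi v = gval) /\ (forall v, S v -> gval <= phi v).

Definition is_gradient_within (n : nat) (S : vec n -> Prop) (g : vec n -> R)
  (x c : vec n) : Prop :=
  forall eps, 0 < eps -> exists delta, 0 < delta /\
    forall y, S y -> sqrt (sqnorm (vsub y x)) < delta ->
      Rabs (g y - g x - dot c (vsub y x)) <= eps * sqrt (sqnorm (vsub y x)).

(** Φ(y,v; ȳ,v̄) = f(y,v) - g(ȳ) - ∇g(ȳ)ᵀ(y - ȳ), with [gradg] = ∇g(ȳ). *)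
Definition Phi (n : nat) (t : 'I_n -> R -> R -> R) (g : vec n -> R)
  (gradg : vec n) (y v ybar : vec n) : R :=
  fobj t y v - g ybar - dot gradg (vsub y ybar).

Definition Psi (n : nat) (t : 'I_n -> R -> R -> R) (G : 'I_n -> R -> R)
  (eta : R) (g : vec n -> R) (gradg : vec n) (rho beta : R) (yk vk : vec n)
  (y v : vec n) : R :=
  Fobj t G eta y v + rho * Phi t g gradg y v yk
  + rho * beta * (sqnorm (vsub y yk) + sqnorm (vsub v vk)).

Definition partially_optimal (n : nat) (Ups V : vec n -> Prop)
  (Psi : vec n -> vec n -> R) (ybar vbar : vec n) : Prop :=
  Ups ybar /\ V vbar /\
  (forall v, V v -> Psi ybar vbar <= Psi ybar v) /\
  (forall y, Ups y -> Psi ybar vbar <= Psi y vbar).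

Definition accumulation_point (n : nat) (ys vs : nat -> vec n)
  (ystar vstar : vec n) : Prop :=
  forall eps, 0 < eps -> forall N : nat, exists j : nat, (N <= j)%N /\
    sqrt (sqnorm (vsub (ys j) ystar) + sqnorm (vsub (vs j) vstar)) < eps.

(* Each AMA step minimises Psi^k exactly in one block of variables, so Psi^k never increases
   along the iterates; since an iterate is always optimal in y, failing partial optimality
   means it is not optimal in v, and the next v-step then strictly decreases Psi^k.
   The iterates stay in the bounded set Upsilon_tau x V, so by Bolzano-Weierstrass a
   subsequence converges, and continuity of Psi^k makes the monotone values converge.
   The proximal term makes Psi^k(y, .) strongly convex, so
   (rho beta / 2) |v_{j+1} - v_{j+2}|^2 <= Psi_j - Psi_{j+1} -> 0: along a subsequence tending
   to an accumulation point, the next v-iterates tend to the same limit, and both block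
   optimality inequalities pass to the limit (Upsilon_tau and V are closed, the support size
   being lower semicontinuous). *)

From Stdlib Require Import Reals Lra Lia Classical ClassicalEpsilon.
From Coquelicot Require Import Coquelicot.
From HB Require Import structures.
From mathcomp Require Import ssreflect ssrfun ssrbool eqtype ssrnat seq fintype bigop.
Local Open Scope R_scope.

HB.instance Definition _ := Monoid.isComLaw.Build R 0 Rplus
  (fun a b c => esym (Rplus_assoc a b c)) Rplus_comm Rplus_0_l.

Lemma rsum_ext {k : nat} (F H : 'I_k -> R) : (forall a, F a = H a) -> rsum F = rsum H.
Proof. by move=> FH; apply: eq_bigr => a _. Qed.

Lemma rsum_add {k : nat} (F H : 'I_k -> R) : rsum (fun a => F a + H a) = rsum F + rsum H.
Proof. exact: big_split. Qed.

Lemma rsum_scal {k : nat} (c : R) (F : 'I_k -> R) : rsum (fun a => c * F a) = c * rsum F.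
Proof. by rewrite /rsum (big_endo (Rmult c)) //; [move=> x y; ring | ring]. Qed.

Lemma rsum_le {k : nat} (F H : 'I_k -> R) : (forall a, F a <= H a) -> rsum F <= rsum H.
Proof. by move=> FH; apply: (big_ind2 Rle) => // *; lra. Qed.

Lemma rsum_ge0 {k : nat} (F : 'I_k -> R) : (forall a, 0 <= F a) -> 0 <= rsum F.
Proof. by move=> F0; apply: (big_ind (Rle 0)) => // *; lra. Qed.

Lemma rsum_ge_term {k : nat} (F : 'I_k -> R) (a : 'I_k) :
  (forall b, 0 <= F b) -> F a <= rsum F.
Proof.
move=> F0; rewrite /rsum (bigD1 a) //=.
rewrite -{1}(Rplus_0_r (F a)); apply: Rplus_le_compat_l.
by apply: (big_ind (Rle 0)) => // *; lra.
Qed.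

Lemma sqnorm_ge0 {n : nat} (x : vec n) : 0 <= sqnorm x.
Proof. by apply: rsum_ge0 => a; apply: pow2_ge_0. Qed.

Lemma sqr_le_sqnorm {n : nat} (x : vec n) (a : 'I_n) : x a ^ 2 <= sqnorm x.
Proof. by apply: rsum_ge_term => b; apply: pow2_ge_0. Qed.

Definition is_lim_vec {I : Type} (x : nat -> I -> R) (l : I -> R) : Prop :=
  forall a, is_lim_seq (fun i => x i a) (l a).

Lemma is_lim_vec_const {I : Type} (x : I -> R) : is_lim_vec (fun _ => x) x.
Proof. by move=> a; apply: is_lim_seq_const. Qed.

Lemma is_lim_seq_rsum {k : nat} (F : nat -> 'I_k -> R) (L : 'I_k -> R) :
  is_lim_vec F L -> is_lim_seq (fun i => rsum (F i)) (rsum L).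
Proof.
rewrite /rsum => FL; elim: (index_enum _) => [|a r IH].
  rewrite big_nil; apply: (is_lim_seq_ext (fun _ => 0)); last exact: is_lim_seq_const.
  by move=> i; rewrite big_nil.
rewrite big_cons; apply: (is_lim_seq_ext (fun i => F i a + \big[Rplus/0]_(b <- r) F i b)).
  by move=> i; rewrite big_cons.
exact: is_lim_seq_plus'.
Qed.

Lemma is_lim_vec_vsub {n : nat} (x z : nat -> vec n) (l m : vec n) :
  is_lim_vec x l -> is_lim_vec z m -> is_lim_vec (fun i => vsub (x i) (z i)) (vsub l m).
Proof. by move=> xl zm a; apply: is_lim_seq_minus'. Qed.

Lemma is_lim_seq_dot {n : nat} (x z : nat -> vec n) (l m : vec n) :
  is_lim_vec x l -> is_lim_vec z m -> is_lim_seq (fun i => dot (x i) (z i)) (dot l m).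
Proof. by move=> xl zm; apply: is_lim_seq_rsum => a; apply: is_lim_seq_mult'. Qed.

Lemma is_lim_seq_sqnorm {n : nat} (x : nat -> vec n) (l : vec n) :
  is_lim_vec x l -> is_lim_seq (fun i => sqnorm (x i)) (sqnorm l).
Proof.
move=> xl; apply: is_lim_seq_rsum => a; rewrite /pow.
by apply: is_lim_seq_mult' => //; apply: is_lim_seq_mult' => //; apply: is_lim_seq_const.
Qed.

Lemma is_lim_seq_ge0 (x : nat -> R) (l : R) :
  (forall i, 0 <= x i) -> is_lim_seq x l -> 0 <= l.
Proof. by move=> x0 xl; apply: (is_lim_seq_le (fun _ => 0) x 0 l x0 (is_lim_seq_const 0) xl). Qed.

Lemma is_lim_seq_eq (u : nat -> R) (l1 l2 : R) :
  is_lim_seq u l1 -> is_lim_seq u l2 -> l1 = l2.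
Proof. by move=> /is_lim_seq_unique l1E /is_lim_seq_unique; rewrite l1E => -[]. Qed.

Lemma is_lim_seq_abs_le (x e : nat -> R) (l : R) :
  (forall i, Rabs (x i - l) <= e i) -> is_lim_seq e 0 -> is_lim_seq x l.
Proof.
move=> xe e0; apply: (is_lim_seq_le_le (fun i => l - e i) _ (fun i => l + e i)).
- by move=> i; have /Rabs_le_between := xe i; lra.
- by have := is_lim_seq_minus' _ _ _ _ (is_lim_seq_const l) e0; rewrite Rminus_0_r.
- by have := is_lim_seq_plus' _ _ _ _ (is_lim_seq_const l) e0; rewrite Rplus_0_r.
Qed.

Lemma eventually_forall {I : finType} (P : I -> nat -> Prop) :
  (forall a, eventually (P a)) -> eventually (fun i => forall a, P a i).
Proof.
move=> evP.
suff : eventually (fun i => forall a, a \in enum I -> P a i).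
  by apply: filter_imp => i Pi a; apply: Pi; rewrite mem_enum.
elim: (enum I) => [|b r IH]; first by exists 0%nat.
apply: filter_imp (filter_and _ _ (evP b) IH) => i [Pb Pr] a.
by rewrite in_cons => /orP [/eqP -> //| ar]; apply: Pr.
Qed.

Lemma is_lim_seq_inv_succ : is_lim_seq (fun i => / INR (S i)) 0.
Proof.
apply/(is_lim_seq_incr_1 (fun i => / INR i)).
exact: (is_lim_seq_inv _ _ is_lim_seq_INR).
Qed.

Lemma subseq_to_zero (D : nat -> R) :
  (forall i, 0 <= D i) ->
  (forall eps, 0 < eps -> forall N, exists j, (N <= j)%N /\ D j < eps) ->
  exists phi, filterlim phi eventually eventually /\ is_lim_seq (fun i => D (phi i)) 0.
Proof.
move=> D0 freqD.
have pick N i : {j | (N <= j)%N /\ D j < / INR (S i)}.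
  by apply: constructive_indefinite_description; apply: freqD; apply/Rinv_0_lt_compat/lt_0_INR; lia.
pose phi := fix phi i :=
  if i is S i' then proj1_sig (pick (S (phi i')) i) else proj1_sig (pick 0%nat 0%nat).
have phiD i : D (phi i) < / INR (S i) by case: i => [|i]; apply: (proj2 (proj2_sig (pick _ _))).
exists phi; split.
  by apply: eventually_subseq => i; case: (proj2_sig (pick (S (phi i)) (S i))) => /leP.
apply: (is_lim_seq_abs_le _ (fun i => / INR (S i))); last exact: is_lim_seq_inv_succ.
by move=> i; rewrite Rminus_0_r Rabs_right; [apply: Rlt_le | apply: Rle_ge].
Qed.

Lemma bolzano_weierstrass_subseq (u : nat -> R) (M : R) :
  (forall j, Rabs (u j) <= M) ->
  exists phi, filterlim phi eventually eventually /\
    exists l : R, is_lim_seq (fun i => u (phi i)) l.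
Proof.
move=> uM.
have [l ul] := Bolzano_Weierstrass u _ (compact_P3 (- M) M)
  (fun j => proj1 (Rabs_le_between _ _) (uM j)).
have [phi [phi_oo ul0]] : exists phi, filterlim phi eventually eventually /\
    is_lim_seq (fun i => Rabs (u (phi i) - l)) 0.
  apply: (subseq_to_zero (fun j => Rabs (u j - l))) => [j|eps eps0 N]; first exact: Rabs_pos.
  have near_l : neighbourhood (fun x => Rabs (x - l) < eps) l by exists (mkposreal eps eps0).
  have [j [Nj ujl]] := ul _ N near_l.
  by exists j; split => //; apply/leP.
exists phi; split => //; exists l.
by apply: (is_lim_seq_abs_le _ _ _ _ ul0) => i; apply: Rle_refl.
Qed.

Lemma bolzano_weierstrass_fin {I : finType} (x : nat -> I -> R) (M : R) :
  (forall i a, Rabs (x i a) <= M) ->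
  exists phi, filterlim phi eventually eventually /\
    exists l : I -> R, is_lim_vec (fun i => x (phi i)) l.
Proof.
move=> xM.
suff [phi [phi_oo xl]] : exists phi, filterlim phi eventually eventually /\
    forall a, a \in enum I -> exists l : R, is_lim_seq (fun i => x (phi i) a) l.
  have {}xl a : {l : R | is_lim_seq (fun i => x (phi i) a) l}.
    have aI : a \in enum I by rewrite mem_enum.
    exact: constructive_indefinite_description (xl a aI).
  by exists phi; split => //; exists (fun a => proj1_sig (xl a)) => a; exact: (proj2_sig (xl a)).
elim: (enum I) => [|b r [phi [phi_oo xl]]].
  by exists id; split => //; apply: filterlim_id.
have [psi [psi_oo [l bl]]] := bolzano_weierstrass_subseq (fun i => x (phi i) b) M (fun i => xM _ b).
exists (fun i => phi (psi i)); split; first exact: filterlim_comp psi_oo phi_oo.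
move=> a; rewrite in_cons => /orP [/eqP -> | ar]; first by exists l.
have [l' al'] := xl a ar; exists l'.
exact: (is_lim_seq_subseq (fun i => x (phi i) a)).
Qed.

Lemma Rabs_le_sqrt_sqnorm {n : nat} (x : vec n) (a : 'I_n) : Rabs (x a) <= sqrt (sqnorm x).
Proof. by rewrite -sqrt_Rsqr_abs Rsqr_pow2; apply/sqrt_le_1_alt/sqr_le_sqnorm. Qed.

Lemma sqnorm_vsub_diag {n : nat} (x : vec n) : sqnorm (vsub x x) = 0.
Proof. by rewrite /sqnorm /rsum big1 // => a _; rewrite /vsub; ring. Qed.

Lemma accumulation_point_of_subseq {n : nat} (ys vs : nat -> vec n) (y v : vec n)
  (phi : nat -> nat) :
  filterlim phi eventually eventually ->
  is_lim_vec (fun i => ys (phi i)) y -> is_lim_vec (fun i => vs (phi i)) v ->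
  accumulation_point ys vs y v.
Proof.
move=> phi_oo yl vl eps eps0 N.
have dist0 : is_lim_seq
    (fun i => sqrt (sqnorm (vsub (ys (phi i)) y) + sqnorm (vsub (vs (phi i)) v))) 0.
  have -> : 0 = sqrt (sqnorm (vsub y y) + sqnorm (vsub v v)).
    by rewrite !sqnorm_vsub_diag Rplus_0_r sqrt_0.
  apply: is_lim_seq_continuous.
    by apply: continuity_pt_sqrt; apply: Rplus_le_le_0_compat; apply: sqnorm_ge0.
  by apply: is_lim_seq_plus'; apply: is_lim_seq_sqnorm; apply: is_lim_vec_vsub => //;
    apply: is_lim_vec_const.
have [i Pi] := filter_and _ _ (proj2 (is_lim_seq_spec _ _) dist0 (mkposreal eps eps0))
  (phi_oo (fun j => (N <= j)%coq_nat) (ex_intro _ N (fun j Nj => Nj))).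
have [dist_i N_phi_i] := Pi i (Nat.le_refl i).
exists (phi i); split; first exact/leP.
by move: dist_i; rewrite Rminus_0_r Rabs_right //; apply: Rle_ge; apply: sqrt_pos.
Qed.

Lemma subseq_of_accumulation_point {n : nat} (ys vs : nat -> vec n) (y v : vec n) :
  accumulation_point ys vs y v ->
  exists phi, filterlim phi eventually eventually /\
    is_lim_vec (fun i => ys (phi i)) y /\ is_lim_vec (fun i => vs (phi i)) v.
Proof.
move=> acc.
have [phi [phi_oo dist0]] := subseq_to_zero _ (fun j => sqrt_pos _) acc.
have coord_le (x z : vec n) a : Rabs (x a) <= sqrt (sqnorm x + sqnorm z).
  apply: Rle_trans (Rabs_le_sqrt_sqnorm x a) (sqrt_le_1_alt _ _ _).
  by have := sqnorm_ge0 z; lra.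
exists phi; split => //; split => a; apply: (is_lim_seq_abs_le _ _ _ _ dist0) => i.
  exact: coord_le.
by rewrite Rplus_comm; apply: coord_le.
Qed.

Section AlternatingMinimization.

Context {n : nat} {U V : vec n -> Prop} {P : vec n -> vec n -> R} {ys vs : nat -> vec n}.
Context {MU MV c : R}.

Hypothesis v_step : forall j : nat,
  V (vs j.+1) /\ forall v, V v -> P (ys j) (vs j.+1) <= P (ys j) v.
Hypothesis y_step : forall j : nat,
  U (ys j.+1) /\ forall y, U y -> P (ys j.+1) (vs j.+1) <= P y (vs j.+1).
Hypothesis no_stop : forall j : nat, ~ partially_optimal U V P (ys j.+1) (vs j.+1).

Lemma ama_value_decreasing (j : nat) :
  P (ys j.+2) (vs j.+2) < P (ys j.+1) (vs j.+1).
Proof.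
(* (y_{j+1}, v_{j+1}) is optimal in y, so non-stopping means it is not optimal in v. *)
have [v [Vv v_better]] : exists v, V v /\ P (ys j.+1) v < P (ys j.+1) (vs j.+1).
  apply: NNPP => no_better; apply: (no_stop j).
  split; first exact: (proj1 (y_step j)).
  split; first exact: (proj1 (v_step j)).
  split; last exact: (proj2 (y_step j)).
  by move=> v Vv; apply: Rnot_lt_le => lt; apply: no_better; exists v.
have := proj2 (v_step j.+1) v Vv; have := proj2 (y_step j.+1) _ (proj1 (y_step j)); lra.
Qed.

Hypothesis U_bounded : forall y a, U y -> Rabs (y a) <= MU.
Hypothesis V_bounded : forall v a, V v -> Rabs (v a) <= MV.

Lemma ama_convergent_subseq : exists phi (y v : vec n),
  filterlim phi eventually eventually /\
  is_lim_vec (fun i => ys (phi i).+1) y /\ is_lim_vec (fun i => vs (phi i).+1) v.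
Proof.
have [phi [phi_oo [y yl]]] :=
  bolzano_weierstrass_fin (fun j => ys j.+1) MU (fun j a => U_bounded _ a (proj1 (y_step j))).
have [psi [psi_oo [v vl]]] := bolzano_weierstrass_fin (fun i => vs (phi i).+1) MV
  (fun i a => V_bounded _ a (proj1 (v_step (phi i)))).
exists (fun i => phi (psi i)), y, v; split; first exact: filterlim_comp psi_oo phi_oo.
by split=> // a; apply: (is_lim_seq_subseq (fun i => ys (phi i).+1 a)).
Qed.

Hypothesis P_continuous : forall (yq vq : nat -> vec n) (y v : vec n),
  (forall i, U (yq i)) -> (forall i, V (vq i)) -> is_lim_vec yq y -> is_lim_vec vq v ->
  is_lim_seq (fun i => P (yq i) (vq i)) (P y v).

Lemma ama_value_converges : exists L : R,
  is_lim_seq (fun j => P (ys j.+1) (vs j.+1)) L.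
Proof.
have [phi [y [v [phi_oo [yl vl]]]]] := ama_convergent_subseq.
have sub_lim : is_lim_seq (fun i => P (ys (phi i).+1) (vs (phi i).+1)) (P y v).
  by apply: P_continuous => // i; [case: (y_step (phi i)) | case: (v_step (phi i))].
have /Lim_seq_correct lim_L : ex_lim_seq (fun j => P (ys j.+1) (vs j.+1)).
  by apply: ex_lim_seq_decr => j; apply: Rlt_le; apply: ama_value_decreasing.
have lim_value : Lim_seq (fun j => P (ys j.+1) (vs j.+1)) = P y v.
  rewrite -(is_lim_seq_unique _ _ (is_lim_seq_subseq _ _ _ phi_oo lim_L)).
  exact: is_lim_seq_unique.
by exists (P y v); rewrite -lim_value.
Qed.

Hypothesis c_pos : 0 < c.
Hypothesis P_growth_v : forall y v w, U y -> V v -> V w ->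
  (forall z, V z -> P y w <= P y z) -> c * sqnorm (vsub v w) <= P y v - P y w.

Lemma ama_v_increment_vanishes :
  is_lim_vec (fun j => vsub (vs j.+1) (vs j.+2)) (fun _ => 0).
Proof.
have [L lim_L] := ama_value_converges.
pose e j := sqrt ((P (ys j.+1) (vs j.+1) - P (ys j.+2) (vs j.+2)) / c).
have e0 : is_lim_seq e 0.
  rewrite -sqrt_0; apply: is_lim_seq_continuous; first by apply: continuity_pt_sqrt; lra.
  rewrite -(Rmult_0_l (/ c)) -(Rminus_diag_eq L L) //.
  apply: is_lim_seq_mult'; last exact: is_lim_seq_const.
  by apply: is_lim_seq_minus' => //; apply/(is_lim_seq_incr_1 (fun j => P (ys j.+1) (vs j.+1))).
move=> a; apply: (is_lim_seq_abs_le _ e) => // j.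
(* c |v_{j+1} - v_{j+2}|^2 <= P y_{j+1} v_{j+1} - P y_{j+1} v_{j+2} <= P_j - P_{j+1} *)
rewrite Rminus_0_r; apply: Rle_trans (Rabs_le_sqrt_sqnorm _ a) _.
apply/sqrt_le_1_alt/Rle_div_r => //; rewrite Rmult_comm.
have := P_growth_v _ _ _ (proj1 (y_step j)) (proj1 (v_step j)) (proj1 (v_step j.+1))
  (proj2 (v_step j.+1)).
have := proj2 (y_step j.+1) _ (proj1 (y_step j)); lra.
Qed.

Hypothesis U_closed : forall (yq : nat -> vec n) (y : vec n),
  (forall i, U (yq i)) -> is_lim_vec yq y -> U y.
Hypothesis V_closed : forall (vq : nat -> vec n) (v : vec n),
  (forall i, V (vq i)) -> is_lim_vec vq v -> V v.

Lemma ama_accumulation_point_partially_optimal (y v : vec n) :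
  accumulation_point (fun j => ys j.+1) (fun j => vs j.+1) y v ->
  partially_optimal U V P y v.
Proof.
move=> /subseq_of_accumulation_point [phi [phi_oo [yl vl]]].
have Uys i : U (ys (phi i).+1) := proj1 (y_step (phi i)).
have Vvs i : V (vs (phi i).+1) := proj1 (v_step (phi i)).
have vl' : is_lim_vec (fun i => vs (phi i).+2) v.
  move=> a; have := is_lim_seq_minus' _ _ _ _ (vl a)
    (is_lim_seq_subseq _ _ _ phi_oo (ama_v_increment_vanishes a)).
  by rewrite Rminus_0_r; apply: is_lim_seq_ext => i; rewrite /vsub; ring.
split; first exact: U_closed Uys yl.
split; first exact: V_closed Vvs vl.
split=> [w Vw | z Uz].
- apply: (is_lim_seq_le _ _ (P y v) (P y w) (fun i => proj2 (v_step (phi i).+1) w Vw));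
    apply: P_continuous => //; [by move=> i; case: (v_step (phi i).+1) | exact: is_lim_vec_const].
- apply: (is_lim_seq_le _ _ (P y v) (P z v) (fun i => proj2 (y_step (phi i)) z Uz));
    apply: P_continuous => //; exact: is_lim_vec_const.
Qed.

Theorem ama_convergence :
  ((forall j : nat, P (ys j.+2) (vs j.+2) < P (ys j.+1) (vs j.+1)) /\
   exists L : R, is_lim_seq (fun j => P (ys j.+1) (vs j.+1)) L) /\
  (exists y v : vec n, accumulation_point (fun j => ys j.+1) (fun j => vs j.+1) y v) /\
  (forall y v : vec n, accumulation_point (fun j => ys j.+1) (fun j => vs j.+1) y v ->
     partially_optimal U V P y v).
Proof.
split; first by split; [exact: ama_value_decreasing | exact: ama_value_converges].
split; last exact: ama_accumulation_point_partially_optimal.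
have [phi [y [v [phi_oo [yl vl]]]]] := ama_convergent_subseq.
by exists y, v; apply: accumulation_point_of_subseq phi_oo yl vl.
Qed.

End AlternatingMinimization.

Section FeasibleFlows.

Variables (n m p : nat) (Delta : 'I_n -> 'I_m -> bool) (Lambda : 'I_p -> 'I_m -> bool).
Variable d : vec p.
Local Notation V := (feasible_flows Delta Lambda d).

Lemma feasible_flows_ge0 (v : vec n) (a : 'I_n) : V v -> 0 <= v a.
Proof.
by move=> [h [h0 [_ ->]]]; apply: rsum_ge0 => r; case: (Delta a r) => //; apply: Rle_refl.
Qed.

Lemma feasible_flows_midpoint (v w : vec n) :
  V v -> V w -> V (fun a => / 2 * v a + / 2 * w a).
Proof.
move=> [h [h0 [hd hv]]] [k [k0 [kd kv]]].
exists (fun r => / 2 * h r + / 2 * k r); split; [|split].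
- by move=> r; have := h0 r; have := k0 r; lra.
- move=> o; have -> : d o = / 2 * d o + / 2 * d o by field.
  rewrite -{1}hd -kd -!rsum_scal -rsum_add; apply: rsum_ext => r.
  by case: (Lambda o r); ring.
- by move=> a; rewrite hv kv -!rsum_scal -rsum_add; apply: rsum_ext => r; case: (Delta a r); ring.
Qed.

Hypothesis route_od : forall r : 'I_m, exists w, Lambda w r = true.
Hypothesis d_ge0 : forall w, 0 <= d w.

Lemma route_flow_le_demand (h : vec m) (r : 'I_m) :
  (forall r, 0 <= h r) -> (forall w, rsum (fun r => if Lambda w r then h r else 0) = d w) ->
  h r <= rsum d.
Proof.
move=> h0 hd; have [w wr] := route_od r.
apply: Rle_trans (rsum_ge_term _ w d_ge0); rewrite -hd.
have := rsum_ge_term (fun s => if Lambda w s then h s else 0) r; rewrite wr; apply.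
by move=> s; case: (Lambda w s) => //; apply: Rle_refl.
Qed.

Lemma feasible_flows_bounded (v : vec n) (a : 'I_n) :
  V v -> Rabs (v a) <= rsum (fun _ : 'I_m => rsum d).
Proof.
move=> Vv; rewrite Rabs_right; last exact/Rle_ge/feasible_flows_ge0.
case: Vv => [h [h0 [hd ->]]]; apply: rsum_le => r.
case: (Delta a r); first exact: route_flow_le_demand.
by apply: rsum_ge0.
Qed.

Lemma feasible_flows_closed (vq : nat -> vec n) (v : vec n) :
  (forall i, V (vq i)) -> is_lim_vec vq v -> V v.
Proof.
move=> Vvq vql.
pose hq i := proj1_sig (constructive_indefinite_description _ (Vvq i)).
have [hq0 [hqd hqv]] : (forall i r, 0 <= hq i r) /\
    (forall i w, rsum (fun r => if Lambda w r then hq i r else 0) = d w) /\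
    (forall i a, vq i a = rsum (fun r => if Delta a r then hq i r else 0)).
  split; [|split] => i;
    by case: (proj2_sig (constructive_indefinite_description _ (Vvq i))) => [? [? ?]].
have hq_bounded i r : Rabs (hq i r) <= rsum d.
  by rewrite Rabs_right; [apply: route_flow_le_demand | apply: Rle_ge].
have [phi [phi_oo [h hl]]] := bolzano_weierstrass_fin _ _ hq_bounded.
exists h; split; [|split].
- by move=> r; apply: (is_lim_seq_ge0 _ _ _ (hl r)) => i.
- move=> w; apply: (is_lim_seq_eq
    (fun i => rsum (fun r => if Lambda w r then hq (phi i) r else 0))).
    by apply: is_lim_seq_rsum => r; case: (Lambda w r) => //; apply: is_lim_seq_const.
  by apply: (is_lim_seq_ext (fun _ => d w)); [move=> i; rewrite hqd | apply: is_lim_seq_const].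
- move=> a; apply: (is_lim_seq_eq (fun i => vq (phi i) a)).
    exact: (is_lim_seq_subseq (fun i => vq i a)).
  apply: (is_lim_seq_ext (fun i => rsum (fun r => if Delta a r then hq (phi i) r else 0))).
    by move=> i; rewrite hqv.
  by apply: is_lim_seq_rsum => r; case: (Delta a r) => //; apply: is_lim_seq_const.
Qed.

End FeasibleFlows.

Lemma supp_card_lim_le {n : nat} (yq : nat -> vec n) (y : vec n) :
  is_lim_vec yq y -> eventually (fun i => (supp_card y <= supp_card (yq i))%N).
Proof.
move=> yl.
have : eventually (fun i => forall a, 0 < y a -> 0 < yq i a).
  apply: eventually_forall => a; case: (Rlt_dec 0 (y a)) => ya; last by exists 0%nat.
  apply: filter_imp (proj2 (is_lim_seq_spec _ _) (yl a) (mkposreal _ ya)) => i.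
  by move=> /= /Rabs_lt_between' ? _; lra.
apply: filter_imp => i pos_i; apply/subset_leq_card/subsetP => a.
rewrite !inE; case: (Rlt_dec 0 (y a)) => // ya _.
by case: (Rlt_dec 0 (yq i a)) => // - []; apply: pos_i.
Qed.

Lemma Upsilon_bounded {n : nat} (u : vec n) (tau : nat) (y : vec n) (a : 'I_n) :
  (forall b, 0 <= u b) -> Upsilon u tau y -> Rabs (y a) <= rsum u.
Proof.
move=> u0 [yu _]; have [y0 ya] := yu a.
by rewrite Rabs_right; [apply: Rle_trans ya (rsum_ge_term _ a u0) | apply: Rle_ge].
Qed.

Lemma Upsilon_closed {n : nat} (u : vec n) (tau : nat) (yq : nat -> vec n) (y : vec n) :
  (forall i, Upsilon u tau (yq i)) -> is_lim_vec yq y -> Upsilon u tau y.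
Proof.
move=> Uyq yl; split.
  move=> a; split; first by apply: (is_lim_seq_ge0 _ _ _ (yl a)) => i; case: (Uyq i) => /(_ a) [].
  apply: (is_lim_seq_le _ _ (y a) (u a) _ (yl a) (is_lim_seq_const _)) => i.
  by case: (Uyq i) => /(_ a) [].
have [N supp_le] := supp_card_lim_le _ _ yl.
exact: leq_trans (supp_le N (Nat.le_refl N)) (proj2 (Uyq N)).
Qed.

Lemma ex_RInt_segment {f : R -> R} {B x y : R} :
  (forall w, 0 <= w <= B -> continuous f w) -> 0 <= x <= B -> 0 <= y <= B -> ex_RInt f x y.
Proof.
move=> fc x0B y0B; apply: ex_RInt_continuous => z; rewrite /Rmin /Rmax.
by case: Rle_dec => _ zxy; apply: fc; lra.
Qed.

Lemma RInt_lipschitz_upper (f : R -> R) (B : R) :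
  (forall w, 0 <= w <= B -> continuous f w) -> 0 <= B ->
  exists M, 0 <= M /\ forall x y, 0 <= x <= B -> 0 <= y <= B ->
    Rabs (RInt f 0 x - RInt f 0 y) <= M * Rabs (x - y).
Proof.
move=> fc B0.
have [w_max [f_le_max _]] := continuity_ab_maj (fun w => Rabs (f w)) 0 B B0
  (fun w w0B => proj2 (continuity_pt_filterlim _ _) (continuous_Rabs_comp _ _ (fc w w0B))).
exists (Rabs (f w_max)); split; first exact: Rabs_pos.
suff le_case x y : 0 <= x <= B -> 0 <= y <= x ->
    Rabs (RInt f 0 x - RInt f 0 y) <= Rabs (f w_max) * (x - y).
  move=> x y x0B y0B; case: (Rle_lt_dec y x) => yx.
    by rewrite (Rabs_right (x - y)); [apply: le_case; lra | lra].
  rewrite Rabs_minus_sym (Rabs_left (x - y)); last lra.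
  by rewrite Ropp_minus_distr; apply: le_case; lra.
move=> x0B yx.
have chasles : RInt f 0 y + RInt f y x = RInt f 0 x.
  by apply: RInt_Chasles; apply: (ex_RInt_segment fc); lra.
have -> : RInt f 0 x - RInt f 0 y = RInt f y x by lra.
rewrite Rmult_comm; apply: abs_RInt_le_const; first lra.
  by apply: (ex_RInt_segment fc); lra.
by move=> w wyx; apply: f_le_max; lra.
Qed.

Lemma continuity_2d_pt_slice (f : R -> R -> R) (y w : R) :
  continuity_2d_pt f y w -> continuous (f y) w.
Proof.
move=> fc; apply/filterlim_locally => eps; have [delta close] := fc eps.
exists delta => z zw; apply: close; last exact: zw.
by rewrite Rminus_eq_0 Rabs_R0; apply: cond_pos.
Qed.

Lemma Rmult_share_lt_half {K e : R} : 0 <= K -> 0 < e -> K * (e / (2 * (K + 1))) < e / 2.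
Proof.
move=> K0 e0; have share0 : 0 < e / (2 * (K + 1)) by apply: Rdiv_lt_0_compat; lra.
have -> : K * (e / (2 * (K + 1))) = e / 2 - e / (2 * (K + 1)) by field; lra.
lra.
Qed.

Lemma is_lim_seq_continuity_2d (f : R -> R -> R) (x y : R) (a b : nat -> R) :
  continuity_2d_pt f x y -> is_lim_seq a x -> is_lim_seq b y ->
  is_lim_seq (fun i => f (a i) (b i)) (f x y).
Proof.
move=> fc /is_lim_seq_spec al /is_lim_seq_spec bl; apply/is_lim_seq_spec => eps.
have [delta close] := fc eps.
by apply: filter_imp (filter_and _ _ (al delta) (bl delta)) => i [? ?]; apply: close.
Qed.

Section ParametricIntegral.

Variable T : R -> R -> R.
Hypothesis T_continuous : forall y w, 0 <= y -> 0 <= w -> continuity_2d_pt T y w.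

Lemma RInt_param_close (c B eps : R) :
  0 <= c -> 0 < eps ->
  exists delta : posreal, forall y x, 0 <= y -> Rabs (y - c) < delta -> 0 <= x <= B ->
    Rabs (RInt (T y) 0 x - RInt (T c) 0 x) <= B * eps.
Proof.
move=> c0 eps0.
have [delta close] := uniform_continuity_2d_1d' T 0 B c
  (fun w w0B => T_continuous _ _ c0 (proj1 w0B)) (mkposreal eps eps0).
exists delta => y x y0 yc x0B.
have slice_ex y' : 0 <= y' -> ex_RInt (T y') 0 x.
  move=> y'0; apply: (ex_RInt_segment (B := x)) => [w w0x||]; try lra.
  by apply: continuity_2d_pt_slice; apply: T_continuous => //; lra.
have diff : RInt (fun w => T y w - T c w) 0 x = RInt (T y) 0 x - RInt (T c) 0 x.
  exact: RInt_minus (slice_ex _ y0) (slice_ex _ c0).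
rewrite -diff; apply: Rle_trans (abs_RInt_le_const _ _ _ eps _ _ _) _.
- lra.
- by apply: ex_RInt_minus; apply: slice_ex.
- move=> w w0x; apply: Rlt_le; apply: close; move: yc => /Rabs_lt_between'; try lra.
  by move=> _; rewrite Rminus_eq_0 Rabs_R0; apply: cond_pos.
- by nra.
Qed.

Lemma is_lim_seq_RInt_param (a b : nat -> R) (c v : R) :
  (forall i, 0 <= a i) -> (forall i, 0 <= b i) -> is_lim_seq a c -> is_lim_seq b v ->
  is_lim_seq (fun i => RInt (T (a i)) 0 (b i)) (RInt (T c) 0 v).
Proof.
move=> a0 b0 al bl; apply/is_lim_seq_spec => eps.
have c0 := is_lim_seq_ge0 _ _ a0 al; have v0 := is_lim_seq_ge0 _ _ b0 bl.
pose B := v + 1; have vB : B = v + 1 by []; clearbody B.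
have B0 : 0 <= B by lra.
have [M [M0 lipschitz]] : exists M, 0 <= M /\ forall x y, 0 <= x <= B -> 0 <= y <= B ->
    Rabs (RInt (T c) 0 x - RInt (T c) 0 y) <= M * Rabs (x - y).
  apply: RInt_lipschitz_upper; last lra.
  by move=> w [w0 _]; apply: continuity_2d_pt_slice; apply: T_continuous.
have eps1 : 0 < eps / (2 * (B + 1)) by apply: Rdiv_lt_0_compat; [apply: cond_pos | lra].
have [delta close] := RInt_param_close _ B _ c0 eps1.
have eps2 : 0 < Rmin 1 (eps / (2 * (M + 1))).
  by apply: Rmin_pos; [lra | apply: Rdiv_lt_0_compat; [apply: cond_pos | lra]].
apply: filter_imp (filter_and _ _ (proj2 (is_lim_seq_spec _ _) al delta)
  (proj2 (is_lim_seq_spec _ _) bl (mkposreal _ eps2))) => i [ai_c bi_v] /=.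
move: bi_v => /= /Rlt_le_trans bi_v.
have bi_1 := bi_v _ (Rmin_l _ _); have {}bi_v := bi_v _ (Rmin_r _ _).
have bi_B : 0 <= b i <= B by move: bi_1 => /Rabs_lt_between'; have := b0 i; lra.
have param_part := close _ _ (a0 i) ai_c bi_B.
have upper_part := lipschitz _ _ bi_B (conj v0 (ltac:(lra) : v <= B)).
have := Rmult_share_lt_half B0 (cond_pos eps).
have := Rmult_share_lt_half M0 (cond_pos eps).
have := Rmult_le_compat_l _ _ _ M0 (Rlt_le _ _ bi_v).
have := Rabs_triang (RInt (T (a i)) 0 (b i) - RInt (T c) 0 (b i))
  (RInt (T c) 0 (b i) - RInt (T c) 0 v).
have -> : RInt (T (a i)) 0 (b i) - RInt (T c) 0 (b i) + (RInt (T c) 0 (b i) - RInt (T c) 0 v)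
  = RInt (T (a i)) 0 (b i) - RInt (T c) 0 v by ring.
lra.
Qed.

End ParametricIntegral.

Lemma convex_on_2d_midpoint_r (h : R -> R -> R) (y w1 w2 : R) :
  convex_on_2d dom2 h -> 0 <= y -> 0 <= w1 -> 0 <= w2 ->
  h y (/ 2 * w1 + / 2 * w2) <= / 2 * h y w1 + / 2 * h y w2.
Proof.
move=> hconv y0 w10 w20.
have := hconv y w1 y w2 (/ 2) (conj y0 w10) (conj y0 w20) ltac:(lra).
have -> : / 2 * y + (1 - / 2) * y = y by field.
by have -> : 1 - / 2 = / 2 by field.
Qed.

Lemma link_travel_time_continuous {t : R -> R -> R} {G : R -> R} :
  link_assumptions t G -> forall y w, 0 <= y -> 0 <= w -> continuity_2d_pt t y w.
Proof.
move=> [[ty [tv t_C1]] _] y w y0 w0; apply: differentiable_continuity_pt.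
by exists (ty y w), (tv y w); case: (t_C1 y w (conj y0 w0)).
Qed.

Lemma link_cost_continuous {t : R -> R -> R} {G : R -> R} :
  link_assumptions t G -> forall y, 0 <= y -> continuous G y.
Proof.
move=> [_ [_ [_ [[G' G_C1] _]]]] y y0; apply: ex_derive_continuous.
by exists (G' y); case: (G_C1 y y0).
Qed.

Section PsiProperties.

Variables (n : nat) (t : 'I_n -> R -> R -> R) (G : 'I_n -> R -> R) (eta : R).
Variables (g : vec n -> R) (gradg : vec n) (rho beta : R) (yk vk : vec n).
Local Notation Psik := (Psi t G eta g gradg rho beta yk vk).

Section Continuity.

Hypothesis t_continuous : forall a y w, 0 <= y -> 0 <= w -> continuity_2d_pt (t a) y w.
Hypothesis G_continuous : forall a y, 0 <= y -> continuous (G a) y.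
Variables (yq vq : nat -> vec n) (y v : vec n).
Hypotheses (yq_ge0 : forall i a, 0 <= yq i a) (vq_ge0 : forall i a, 0 <= vq i a).
Hypotheses (yql : is_lim_vec yq y) (vql : is_lim_vec vq v).

Lemma is_lim_seq_fobj : is_lim_seq (fun i => fobj t (yq i) (vq i)) (fobj t y v).
Proof.
by apply: is_lim_seq_rsum => a; apply: (is_lim_seq_RInt_param (t a)) => //; apply: t_continuous.
Qed.

Lemma is_lim_seq_Fobj : is_lim_seq (fun i => Fobj t G eta (yq i) (vq i)) (Fobj t G eta y v).
Proof.
have y0 a : 0 <= y a by apply: (is_lim_seq_ge0 _ _ _ (yql a)).
have v0 a : 0 <= v a by apply: (is_lim_seq_ge0 _ _ _ (vql a)).
apply: is_lim_seq_plus'.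
  apply: is_lim_seq_rsum => a; apply: (is_lim_seq_continuity_2d (fun y w => t a y w * w)) => //.
  by apply: continuity_2d_pt_mult; [apply: t_continuous | apply: continuity_2d_pt_id2].
apply: is_lim_seq_mult'; first exact: is_lim_seq_const.
apply: is_lim_seq_rsum => a; apply: is_lim_seq_continuous => //.
exact/continuity_pt_filterlim/G_continuous.
Qed.

Lemma is_lim_seq_Psi : is_lim_seq (fun i => Psik (yq i) (vq i)) (Psik y v).
Proof.
apply: is_lim_seq_plus'; first apply: is_lim_seq_plus'; first exact: is_lim_seq_Fobj.
  apply: is_lim_seq_mult'; first exact: is_lim_seq_const.
  apply: is_lim_seq_minus'; first apply: is_lim_seq_minus'; first exact: is_lim_seq_fobj.
    exact: is_lim_seq_const.
  by apply: is_lim_seq_dot; [apply: is_lim_vec_const | apply: is_lim_vec_vsub => //;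
    apply: is_lim_vec_const].
apply: is_lim_seq_mult'; first exact: is_lim_seq_const.
by apply: is_lim_seq_plus'; apply: is_lim_seq_sqnorm; apply: is_lim_vec_vsub => //;
  apply: is_lim_vec_const.
Qed.

End Continuity.

Section Convexity.

Hypothesis t_integral_convex :
  forall a, convex_on_2d dom2 (fun y v => RInt (fun w => t a y w) 0 v).
Hypothesis t_flow_convex : forall a, convex_on_2d dom2 (fun y v => t a y v * v).
Hypothesis rho_ge0 : 0 <= rho.
Variables y v w : vec n.
Hypotheses (y_ge0 : forall a, 0 <= y a) (v_ge0 : forall a, 0 <= v a) (w_ge0 : forall a, 0 <= w a).

Lemma Psi_midpoint_v :
  Psik y (fun a => / 2 * v a + / 2 * w a)
  <= / 2 * Psik y v + / 2 * Psik y w - rho * beta / 4 * sqnorm (vsub v w).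
Proof.
set m := fun a => / 2 * v a + / 2 * w a.
have flow : rsum (fun a => t a (y a) (m a) * m a)
    <= / 2 * rsum (fun a => t a (y a) (v a) * v a) + / 2 * rsum (fun a => t a (y a) (w a) * w a).
  rewrite -!rsum_scal -rsum_add; apply: rsum_le => a.
  exact: convex_on_2d_midpoint_r (t_flow_convex a) (y_ge0 a) (v_ge0 a) (w_ge0 a).
have integral : fobj t y m <= / 2 * fobj t y v + / 2 * fobj t y w.
  rewrite /fobj -!rsum_scal -rsum_add; apply: rsum_le => a.
  exact: convex_on_2d_midpoint_r (t_integral_convex a) (y_ge0 a) (v_ge0 a) (w_ge0 a).
(* the parallelogram law for the proximal term is where the strong convexity comes from *)
have quad : sqnorm (vsub m vk)
    = / 2 * sqnorm (vsub v vk) + / 2 * sqnorm (vsub w vk) + (- / 4) * sqnorm (vsub v w).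
  rewrite /sqnorm -!rsum_scal -!rsum_add; apply: rsum_ext => a; by rewrite /vsub /m; field.
have := Rmult_le_compat_l _ _ _ rho_ge0 integral.
rewrite /Psi /Fobj /Phi quad; nra.
Qed.

Lemma Psi_quadratic_growth_v :
  Psik y w <= Psik y (fun a => / 2 * v a + / 2 * w a) ->
  rho * beta / 2 * sqnorm (vsub v w) <= Psik y v - Psik y w.
Proof. by have := Psi_midpoint_v; lra. Qed.

End Convexity.

End PsiProperties.

Theorem theorem4p1
  (n m p : nat)
  (Delta : 'I_n -> 'I_m -> bool) (Lambda : 'I_p -> 'I_m -> bool) (d : vec p)
  (HLr : forall r : 'I_m, exists! w : 'I_p, Lambda w r = true)
  (HLw : forall w : 'I_p, exists r : 'I_m, Lambda w r = true)
  (Hd : forall w, 0 < d w)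
  (u : vec n) (Hu : forall a, 0 <= u a)
  (tau : nat) (Htau : (1 <= tau <= n)%N)
  (t : 'I_n -> R -> R -> R) (G : 'I_n -> R -> R)
  (Hlink : forall a, link_assumptions (t a) (G a))
  (eta : R) (Heta : 0 < eta)
  (g : vec n -> R)
  (Hg : forall y, box u y ->
          is_min_value (feasible_flows Delta Lambda d) (fun v => fobj t y v) (g y))
  (rho beta : R) (Hrho : 0 < rho) (Hbeta : 0 < beta)
  (yk vk : vec n)
  (Hyk : Upsilon u tau yk) (Hvk : feasible_flows Delta Lambda d vk)
  (gradg : vec n) (Hgrad : is_gradient_within (box u) g yk gradg)
  (y0 : vec n) (Hy0 : Upsilon u tau y0)
  (ys vs : nat -> vec n)
  (Hys0 : ys 0%N = y0)
  (Hvstep : forall j : nat,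
     feasible_flows Delta Lambda d (vs j.+1) /\
     forall v, feasible_flows Delta Lambda d v ->
       Psi t G eta g gradg rho beta yk vk (ys j) (vs j.+1)
       <= Psi t G eta g gradg rho beta yk vk (ys j) v)
  (Hystep : forall j : nat,
     Upsilon u tau (ys j.+1) /\
     forall y, Upsilon u tau y ->
       Psi t G eta g gradg rho beta yk vk (ys j.+1) (vs j.+1)
       <= Psi t G eta g gradg rho beta yk vk y (vs j.+1))
  (Hnostop : forall j : nat,
     ~ partially_optimal (Upsilon u tau) (feasible_flows Delta Lambda d)
         (Psi t G eta g gradg rho beta yk vk) (ys j.+1) (vs j.+1)) :
  (* (i) *)
  ((forall j : nat,
      Psi t G eta g gradg rho beta yk vk (ys j.+2) (vs j.+2)
      < Psi t G eta g gradg rho beta yk vk (ys j.+1) (vs j.+1)) /\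
   exists L : R,
     is_lim_seq (fun j : nat => Psi t G eta g gradg rho beta yk vk (ys j.+1) (vs j.+1))
                (Coquelicot.Rbar.Finite L)) /\
  (* (ii) *)
  (exists ystar vstar : vec n,
     accumulation_point (fun j => ys j.+1) (fun j => vs j.+1) ystar vstar) /\
  (* (iii) *)
  (forall ystar vstar : vec n,
     accumulation_point (fun j => ys j.+1) (fun j => vs j.+1) ystar vstar ->
     partially_optimal (Upsilon u tau) (feasible_flows Delta Lambda d)
       (Psi t G eta g gradg rho beta yk vk) ystar vstar).
Proof.
have t_continuous a := link_travel_time_continuous (Hlink a).
have G_continuous a := link_cost_continuous (Hlink a).
have route_od r : exists w, Lambda w r = true by have [w [? _]] := HLr r; exists w.
have d_ge0 w : 0 <= d w := Rlt_le _ _ (Hd w).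
have y_ge0 y a : Upsilon u tau y -> 0 <= y a by case=> /(_ a) [].
have integral_convex a : convex_on_2d dom2 (fun y v => RInt (fun w => t a y w) 0 v).
  by case: (Hlink a) => [_ [_ [_ [_ [_ [_ []]]]]]].
have flow_convex a : convex_on_2d dom2 (fun y v => t a y v * v).
  by case: (Hlink a) => [_ [_ [_ [_ [_ [_ []]]]]]].
apply: (ama_convergence Hvstep Hystep Hnostop (MU := rsum u)
  (MV := rsum (fun _ : 'I_m => rsum d)) (c := rho * beta / 2)).
- by move=> y a; apply: Upsilon_bounded.
- by move=> v a; apply: feasible_flows_bounded.
- move=> yq vq y v Uyq Vvq yl vl; apply: is_lim_seq_Psi => // i a.
    exact: y_ge0.
  exact: feasible_flows_ge0.
- by apply: Rdiv_lt_0_compat; [apply: Rmult_lt_0_compat | lra].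
- move=> y v w Uy Vv Vw w_min; apply: Psi_quadratic_growth_v => //; first lra.
  + by move=> a; apply: y_ge0.
  + by move=> a; apply: feasible_flows_ge0 Vv.
  + by move=> a; apply: feasible_flows_ge0 Vw.
  + by apply: w_min; apply: feasible_flows_midpoint.
- exact: Upsilon_closed.
- exact: feasible_flows_closed.
Qed.
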